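(* Consider a degree-corrected stochastic block model with $K$ communities, membership matrix $\Theta\in\mathbb M_{n,K}$ (every community nonempty), symmetric $B\in[0,1]^{K\times K}$ with $\mathrm{rank}(B)=K'<K$, and node propensities $\vartheta\in\mathbb R^n_{+}$ with $\max_{i\in G_k}\vartheta_i=1$ for each $k$. Let $P=\mathrm{diag}(\vartheta)\Theta B\Theta^\intercal\mathrm{diag}(\vartheta)=U\Sigma U^\intercal$ be its eigenvalue decomposition with $U\in\mathbb R^{n\times K'}$. Let $\phi_k\in\mathbb R^n$ agree with $\vartheta$ on $G_k$ and be zero elsewhere, $\Omega=\mathrm{diag}(\|\phi_1\|_2,\dots,\|\phi_K\|_2)$, $\bar B=\Omega B\Omega$, and $\bar B=HDH^\intercal$ its eigenvalue decomposition with $H\in\mathbb R^{K\times K'}$. Suppose there exist deterministic positive sequences $\{\eta'_n\},\{\underline\iota_n\},\{\overline\iota_n\},\{\beta_n\}$ such that $\min_{1\le k<l\le K}\bar B_{kk}\bar B_{ll}-\bar B_{kl}^2\ge\eta'_n>0$, $0<\underline\iota_n<\Sigma_{ii}<\overline\iota_n$ for all $1\le i\le K'$, and $0<\min_k\bar B_{kk}\le\max_k\bar B_{kk}\le\beta_n$. Then $$\max_{k\ne l}\cos(H_{k\ast},H_{l\ast})\le\xi'_n\quad\text{with}\quad\xi'_n=\sqrt{1-\frac{\eta'_n}{\overline\iota_n\beta_n^2/\underline\iota_n}}.$$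
   Context: $\mathbb M_{n,K}$: $n\times K$ 0/1 matrices with exactly one $1$ per row; $G_k$ is the set of nodes whose row has its $1$ in column $k$. $M_{k\ast}$ denotes the $k$-th row. $\cos(a,b)=a^\intercal b/(\|a\|_2\|b\|_2)$. *)

From HB Require Import structures.
From mathcomp Require Import all_boot all_order all_algebra.
Set Implicit Arguments. Unset Strict Implicit. Unset Printing Implicit Defensive.
Import Order.TTheory GRing.Theory Num.Theory.
Local Open Scope ring_scope.

Definition dotv (R : rcfType) (m : nat) (a b : 'rV[R]_m) : R := \sum_(j < m) a 0 j * b 0 j.
Definition norm2 (R : rcfType) (m : nat) (a : 'rV[R]_m) : R := Num.sqrt (dotv a a).
Definition cosv (R : rcfType) (m : nat) (a b : 'rV[R]_m) : R := dotv a b / (norm2 a * norm2 b).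

Definition is_membership (R : rcfType) (n K : nat) (Theta : 'M[R]_(n, K)) : Prop :=
  (forall i k, Theta i k = 0 \/ Theta i k = 1) /\
  (forall i, #|[set k | Theta i k == 1]| = 1%N).

Definition community (R : rcfType) (n K : nat) (Theta : 'M[R]_(n, K)) (k : 'I_K) : {set 'I_n} :=
  [set i | Theta i k == 1].

Definition phi (R : rcfType) (n K : nat) (Theta : 'M[R]_(n, K)) (theta : 'rV[R]_n) (k : 'I_K)
  : 'rV[R]_n := \row_i (if i \in community Theta k then theta 0 i else 0).

Definition Omega (R : rcfType) (n K : nat) (Theta : 'M[R]_(n, K)) (theta : 'rV[R]_n) : 'M[R]_K :=
  diag_mx (\row_k norm2 (phi Theta theta k)).

Definition Bbar (R : rcfType) (n K : nat) (Theta : 'M[R]_(n, K)) (theta : 'rV[R]_n) (B : 'M[R]_K)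
  : 'M[R]_K := Omega Theta theta *m B *m Omega Theta theta.

Definition Pmat (R : rcfType) (n K : nat) (Theta : 'M[R]_(n, K)) (theta : 'rV[R]_n) (B : 'M[R]_K)
  : 'M[R]_n := diag_mx theta *m Theta *m B *m Theta^T *m diag_mx theta.

From HB Require Import structures.
From mathcomp Require Import all_boot all_order all_algebra.
From mathcomp Require Import ring lra.
Import Order.TTheory GRing.Theory Num.Theory.
Local Open Scope ring_scope.

(* Normalising the vectors phi_k gives a matrix Z with orthonormal columns and
   P = Z Bbar Z^T = (Z H) D (Z H)^T.  As rank B = K', D is invertible, so Z H
   and U span the same space and D is orthogonally similar to Sigma; hence
   iota_lo |x|^2 <= x D x^T <= iota_hi |x|^2.  The rows a = H_k, b = H_l satisfy
   a D a^T = Bbar_kk, a D b^T = Bbar_kl, b D b^T = Bbar_ll.  Evaluating both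
   forms at b - t a with t = <a,b> / |a|^2 gives
   |a|^2 (Bbar_kk Bbar_ll - Bbar_kl^2) <= Bbar_kk iota_hi (|a|^2 |b|^2 - <a,b>^2),
   and together with eta <= Bbar_kk Bbar_ll - Bbar_kl^2, iota_lo |b|^2 <= Bbar_ll
   and Bbar_kk Bbar_ll <= beta^2 this bounds cos^2 by
   1 - eta iota_lo / (iota_hi beta^2). *)

Definition bform {R : comPzRingType} {p : nat} (M : 'M[R]_p) (a b : 'rV[R]_p) : R :=
  (a *m M *m b^T) 0 0.

Lemma bform_row {R : comPzRingType} {m p q : nat}
    (A : 'M[R]_(m, p)) (M : 'M[R]_p) (E : 'M[R]_(q, p)) k l :
  bform M (row k A) (row l E) = (A *m M *m E^T) k l.
Proof. by rewrite /bform -row_mul !mxE; apply: eq_bigr => j _; rewrite !mxE. Qed.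

Lemma bform_sym {R : comPzRingType} {p : nat} (M : 'M[R]_p) (a b : 'rV[R]_p) :
  M^T = M -> bform M a b = bform M b a.
Proof.
move=> sM; have -> : bform M a b = (a *m M *m b^T)^T 0 0 by rewrite mxE.
by rewrite !trmx_mul trmxK sM mulmxA.
Qed.

Lemma bform_sub_scale {R : comPzRingType} {p : nat} (M : 'M[R]_p) (a b : 'rV[R]_p) (t : R) :
  M^T = M ->
  bform M (b - t *: a) (b - t *: a) =
  bform M b b - 2 * t * bform M a b + t ^+ 2 * bform M a a.
Proof.
move=> sM; have ba := bform_sym M a b sM; move: ba; rewrite /bform.
rewrite !mulmxBl linearB /= linearZ /= !mulmxBr -!scalemxAl -!scalemxAr !mxE => ->.
ring.
Qed.

Lemma dotv_bform {R : rcfType} {p : nat} (a b : 'rV[R]_p) : dotv a b = bform 1%:M a b.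
Proof. by rewrite /bform mulmx1 /dotv !mxE; apply: eq_bigr => j _; rewrite mxE. Qed.

Lemma dotv_ge0 {R : rcfType} {p : nat} (a : 'rV[R]_p) : 0 <= dotv a a.
Proof. by apply: sumr_ge0 => j _; rewrite -expr2 sqr_ge0. Qed.

Lemma norm2_sqr {R : rcfType} {p : nat} (a : 'rV[R]_p) : norm2 a ^+ 2 = dotv a a.
Proof. by rewrite sqr_sqrtr ?dotv_ge0. Qed.

Lemma cosv_sqr {R : rcfType} {p : nat} (a b : 'rV[R]_p) :
  cosv a b ^+ 2 = dotv a b ^+ 2 / (dotv a a * dotv b b).
Proof. by rewrite expr_div_n exprMn !norm2_sqr. Qed.

Lemma orthonormal_congr_form {R : comUnitRingType} {m p q : nat}
    {W : 'M[R]_(m, p)} {U : 'M[R]_(m, q)} {D : 'M[R]_p} {S : 'M[R]_q} :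
  W^T *m W = 1%:M -> U^T *m U = 1%:M -> D \in unitmx ->
  W *m D *m W^T = U *m S *m U^T ->
  forall x : 'rV[R]_p, exists y : 'rV[R]_q,
    x *m D *m x^T = y *m S *m y^T /\ x *m x^T = y *m y^T.
Proof.
move=> oW oU uD WDU x.
(* Since D is invertible, the rows of W^T lie in the row space of U^T. *)
pose y := x *m invmx D *m W^T *m U *m S.
have yU : y *m U^T = x *m W^T.
  have -> : y *m U^T = x *m invmx D *m W^T *m (U *m S *m U^T) by rewrite !mulmxA.
  rewrite -WDU.
  have -> : x *m invmx D *m W^T *m (W *m D *m W^T) =
            x *m (invmx D *m (W^T *m W) *m D) *m W^T by rewrite !mulmxA.
  by rewrite oW mulmx1 mulVmx ?mulmx1.
exists y; split.
- have -> : x *m D *m x^T = (x *m W^T) *m (W *m D *m W^T) *m (x *m W^T)^T.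
    rewrite trmx_mul trmxK.
    have -> : x *m W^T *m (W *m D *m W^T) *m (W *m x^T) =
              x *m (W^T *m W) *m D *m (W^T *m W) *m x^T by rewrite !mulmxA.
    by rewrite oW !mulmx1.
  rewrite -yU WDU trmx_mul trmxK.
  have -> : y *m U^T *m (U *m S *m U^T) *m (U *m y^T) =
            y *m (U^T *m U) *m S *m (U^T *m U) *m y^T by rewrite !mulmxA.
  by rewrite oU !mulmx1.
- have -> : x *m x^T = (x *m W^T) *m (x *m W^T)^T.
    by rewrite trmx_mul trmxK mulmxA -(mulmxA x) oW mulmx1.
  by rewrite -yU trmx_mul trmxK mulmxA -(mulmxA y) oU mulmx1.
Qed.

Lemma diag_form_bounds {R : realDomainType} {q : nat} (s : 'rV[R]_q) (lo hi : R) :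
  (forall j, lo <= s 0 j <= hi) ->
  forall y : 'rV[R]_q,
    lo * (y *m y^T) 0 0 <= (y *m diag_mx s *m y^T) 0 0 <= hi * (y *m y^T) 0 0.
Proof.
move=> sb y; rewrite mul_mx_diag !mxE !mulr_sumr.
apply/andP; split; apply: ler_sum => j _; rewrite !mxE;
  have /andP[lo_s s_hi] := sb j; nra.
Qed.

Lemma unitmx_of_rank_factor {R : fieldType} {m n p : nat}
    (A : 'M[R]_(m, p)) (D : 'M[R]_p) (C : 'M[R]_(p, n)) :
  \rank (A *m D *m C) = p -> D \in unitmx.
Proof.
move=> rk; rewrite -row_free_unit /row_free eqn_leq rank_leq_row -{1}rk.
exact: leq_trans (mxrankM_maxl _ _) (mxrankM_maxr _ _).
Qed.

Lemma spectral_form_bounds {R : rcfType} {m p q : nat}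
    {W : 'M[R]_(m, p)} {U : 'M[R]_(m, q)} {D : 'M[R]_p} {S : 'M[R]_q} {lo hi : R} :
  W^T *m W = 1%:M -> U^T *m U = 1%:M -> D \in unitmx ->
  W *m D *m W^T = U *m S *m U^T ->
  is_diag_mx S -> (forall i, lo <= S i i <= hi) ->
  forall x : 'rV[R]_p, lo * dotv x x <= bform D x x <= hi * dotv x x.
Proof.
move=> oW oU uD WDU /diag_mxP[s eS] Sb x.
have sb j : lo <= s 0 j <= hi by have := Sb j; rewrite eS mxE eqxx mulr1n.
have [y [xDx xx]] := orthonormal_congr_form oW oU uD WDU x.
rewrite !dotv_bform /bform mulmx1 xDx xx eS.
exact: diag_form_bounds.
Qed.

Lemma gram_form_le {R : rcfType} {p : nat} (D : 'M[R]_p) (hi : R) (a b : 'rV[R]_p) :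
  D^T = D -> (forall x, bform D x x <= hi * dotv x x) ->
  0 < dotv a a -> 0 <= bform D a a ->
  dotv a a * (bform D a a * bform D b b - bform D a b ^+ 2) <=
  bform D a a * hi * (dotv a a * dotv b b - dotv a b ^+ 2).
Proof.
move=> sD Dhi a_gt0 Da_ge0.
set A := dotv a a; set c := dotv a b; set pa := bform D a a; set r := bform D a b.
pose t := c / A.
have := Dhi (b - t *: a).
rewrite bform_sub_scale // !dotv_bform bform_sub_scale ?trmx1 // -!dotv_bform -/A -/c.
have -> : dotv b b - 2 * t * c + t ^+ 2 * A = (A * dotv b b - c ^+ 2) / A.
  by rewrite /t; field; rewrite gt_eqF.
move=> le_t.
have gram_t : pa * bform D b b - r ^+ 2 <= pa * (bform D b b - 2 * t * r + t ^+ 2 * pa).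
  by rewrite -subr_ge0 (_ : _ - _ = (pa * t - r) ^+ 2) ?sqr_ge0 //; ring.
have -> : pa * hi * (A * dotv b b - c ^+ 2) =
          A * (pa * (hi * ((A * dotv b b - c ^+ 2) / A))).
  by field; exact: lt0r_neq0.
rewrite ler_pM2l //.
exact: le_trans gram_t (ler_wpM2l Da_ge0 le_t).
Qed.

Lemma gram_ratio_le {R : realFieldType} (A Bn c pa pb r eta lo hi beta : R) :
  0 < lo -> 0 < hi -> 0 < eta -> 0 < A -> 0 < Bn ->
  0 < pa <= beta -> 0 < pb <= beta -> eta <= pa * pb - r ^+ 2 -> lo * Bn <= pb ->
  A * (pa * pb - r ^+ 2) <= pa * hi * (A * Bn - c ^+ 2) ->
  c ^+ 2 / (A * Bn) <= 1 - eta / (hi * beta ^+ 2 / lo).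
Proof.
move=> lo_gt0 hi_gt0 eta_gt0 A_gt0 Bn_gt0 /andP[pa_gt0 pa_le] /andP[pb_gt0 pb_le]
  eta_le lo_pb gram.
have beta_gt0 : 0 < beta by apply: lt_le_trans pa_le.
set d := A * Bn - c ^+ 2 in gram *.
have d_ge0 : 0 <= d.
  have : 0 <= pa * hi * d by apply: le_trans gram; nra.
  by rewrite pmulr_rge0 // mulr_gt0.
have key : eta * lo * (A * Bn) <= hi * beta ^+ 2 * d.
  have papb : pa * pb <= beta ^+ 2 by rewrite expr2 ler_pM // ltW.
  have hd_ge0 : 0 <= hi * d by rewrite mulr_ge0 // ltW.
  have AloBn_ge0 : 0 <= A * (lo * Bn) by rewrite !mulr_ge0 // ltW.
  have s1 := ler_wpM2r AloBn_ge0 eta_le.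
  have s2 := ler_wpM2r (mulr_ge0 (ltW lo_gt0) (ltW Bn_gt0)) gram.
  have s3 := ler_wpM2l (mulr_ge0 (mulr_ge0 (ltW pa_gt0) (ltW hi_gt0)) d_ge0) lo_pb.
  have s4 := ler_wpM2r hd_ge0 papb.
  lra.
rewrite -subr_ge0.
have -> : 1 - eta / (hi * beta ^+ 2 / lo) - c ^+ 2 / (A * Bn) =
          (hi * beta ^+ 2 * d - eta * lo * (A * Bn)) / (hi * beta ^+ 2 * (A * Bn)).
  by rewrite /d; field; rewrite !gt_eqF // ?mulr_gt0 ?exprn_gt0.
by rewrite divr_ge0 ?subr_ge0 // ltW // !mulr_gt0 ?exprn_gt0.
Qed.

Lemma cosv_le_of_form_bounds {R : rcfType} {p : nat} (D : 'M[R]_p) (a b : 'rV[R]_p)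
    (eta lo hi beta : R) :
  D^T = D -> (forall x, lo * dotv x x <= bform D x x <= hi * dotv x x) ->
  0 < lo -> 0 < hi -> 0 < eta ->
  0 < bform D a a <= beta -> 0 < bform D b b <= beta ->
  eta <= bform D a a * bform D b b - bform D a b ^+ 2 ->
  cosv a b <= Num.sqrt (1 - eta / (hi * beta ^+ 2 / lo)).
Proof.
move=> sD Db lo_gt0 hi_gt0 eta_gt0 Da Dbb eta_le.
have dotv_gt0 x : 0 < bform D x x -> 0 < dotv x x.
  by move=> Dx_gt0; rewrite -(pmulr_rgt0 _ hi_gt0); case/andP: (Db x) => _; apply: lt_le_trans.
have /andP[Da_gt0 _] := Da; have /andP[Dbb_gt0 _] := Dbb.
apply: le_trans (ler_norm _) _; rewrite -sqrtr_sqr ler_wsqrtr // cosv_sqr.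
apply: gram_ratio_le Da Dbb eta_le _ _ => //; rewrite ?dotv_gt0 //.
- by case/andP: (Db b).
- apply: gram_form_le; rewrite ?dotv_gt0 ?ltW // => x.
  by case/andP: (Db x).
Qed.

Definition normalized_cols {R : rcfType} {n K : nat} (v : 'I_K -> 'rV[R]_n) : 'M[R]_(n, K) :=
  \matrix_(i, k) (v k 0 i / norm2 (v k)).

Section NormalizedColumns.
Context {R : rcfType} {n K : nat} (v : 'I_K -> 'rV[R]_n).
Hypothesis v_neq0 : forall k, norm2 (v k) != 0.

Lemma normalized_cols_orthonormal :
  (forall k l, k != l -> dotv (v k) (v l) = 0) ->
  (normalized_cols v)^T *m normalized_cols v = 1%:M.
Proof.
move=> v_orth; apply/matrixP => k l; rewrite !mxE.
have -> : \sum_i (normalized_cols v)^T k i * normalized_cols v i l =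
          dotv (v k) (v l) / (norm2 (v k) * norm2 (v l)).
  rewrite /dotv mulr_suml; apply: eq_bigr => i _; rewrite !mxE.
  by field; rewrite !v_neq0.
have [<-|kl] := eqVneq k l; last by rewrite v_orth ?mul0r.
by rewrite -expr2 norm2_sqr mulfV // -norm2_sqr expf_neq0.
Qed.

Lemma normalized_colsK :
  normalized_cols v *m diag_mx (\row_k norm2 (v k)) = \matrix_(i, k) v k 0 i.
Proof. by apply/matrixP => i k; rewrite mul_mx_diag !mxE divfK. Qed.

Lemma diag_norm2_unit : diag_mx (\row_k norm2 (v k)) \in unitmx.
Proof.
by rewrite unitmxE det_diag unitfE; apply/prodf_neq0 => k _; rewrite mxE.
Qed.

End NormalizedColumns.

Section Membership.
Context {R : rcfType} {n K : nat} (Theta : 'M[R]_(n, K)) (theta : 'rV[R]_n).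
Hypothesis memb : is_membership Theta.

Lemma community_inj {i k l} :
  i \in community Theta k -> i \in community Theta l -> k = l.
Proof.
case: memb => _ /(_ i) card1; rewrite !inE => ik il.
have /card_le1_eqP le1 := eq_leq card1.
by apply: le1; rewrite inE.
Qed.

Lemma dotv_phi_neq k l : k != l -> dotv (phi Theta theta k) (phi Theta theta l) = 0.
Proof.
move=> kl; apply: big1 => i _; rewrite !mxE.
case: ifP => ik; case: ifP => il; rewrite ?mulr0 ?mul0r //.
by move: kl; rewrite (community_inj ik il) eqxx.
Qed.

Lemma phi_cols : \matrix_(i, k) phi Theta theta k 0 i = diag_mx theta *m Theta.
Proof.
apply/matrixP => i k; rewrite mul_diag_mx !mxE inE.
by case: memb => /(_ i k)[]-> _; rewrite ?eqxx ?mulr1 // eq_sym oner_eq0 mulr0.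
Qed.

End Membership.

Lemma norm2_phi_gt0 {R : rcfType} {n K : nat} (Theta : 'M[R]_(n, K)) (theta : 'rV[R]_n) k :
  (forall i, 0 < theta 0 i) -> community Theta k != set0 ->
  0 < norm2 (phi Theta theta k).
Proof.
move=> theta_gt0 /set0Pn[i ik].
rewrite sqrtr_gt0 /dotv (bigD1 i) //= ltr_pwDl //.
  by rewrite !mxE ik mulr_gt0.
by apply: sumr_ge0 => j _; rewrite -expr2 sqr_ge0.
Qed.

Lemma Pmat_normalized {R : rcfType} {n K : nat}
    (Theta : 'M[R]_(n, K)) (theta : 'rV[R]_n) (B : 'M[R]_K) :
  is_membership Theta -> (forall k, norm2 (phi Theta theta k) != 0) ->
  let Z := normalized_cols (phi Theta theta) in
  Pmat Theta theta B = Z *m Bbar Theta theta B *m Z^T.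
Proof.
move=> memb om_neq0 Z.
have ZOm : Z *m Omega Theta theta = diag_mx theta *m Theta.
  by rewrite normalized_colsK // phi_cols.
have ZOmT : Theta^T *m diag_mx theta = (Z *m Omega Theta theta)^T.
  by rewrite ZOm trmx_mul tr_diag_mx.
rewrite /Pmat -mulmxA ZOmT -ZOm trmx_mul [(Omega _ _)^T]tr_diag_mx.
by rewrite /Bbar !mulmxA.
Qed.

Lemma Bbar_eigen_unit {R : rcfType} {n K K' : nat}
    {Theta : 'M[R]_(n, K)} {theta : 'rV[R]_n} {B : 'M[R]_K} {H : 'M[R]_(K, K')}
    {D : 'M[R]_K'} :
  (forall k, norm2 (phi Theta theta k) != 0) -> \rank B = K' ->
  Bbar Theta theta B = H *m D *m H^T -> D \in unitmx.
Proof.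
move=> om_neq0 rkB BH.
have uOm : Omega Theta theta \in unitmx := diag_norm2_unit _ om_neq0.
set Oi := invmx (Omega Theta theta).
apply: (unitmx_of_rank_factor (Oi *m H) _ (H^T *m Oi)).
have -> : Oi *m H *m D *m (H^T *m Oi) = Oi *m Bbar Theta theta B *m Oi.
  by rewrite BH !mulmxA.
by rewrite /Bbar !mulmxA mulVmx // mul1mx -mulmxA mulmxV ?mulmx1.
Qed.

Theorem lemma4 (R : rcfType) (n K K' : nat)
  (Theta : 'M[R]_(n, K)) (B : 'M[R]_K) (theta : 'rV[R]_n)
  (U : 'M[R]_(n, K')) (Sigma : 'M[R]_K') (H : 'M[R]_(K, K')) (D : 'M[R]_K')
  (eta iota_lo iota_hi beta : R) :
  is_membership Theta ->
  (forall k, community Theta k != set0) ->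
  B^T = B ->
  (forall k l, 0 <= B k l <= 1) ->
  \rank B = K' -> (K' < K)%N ->
  (forall i, 0 < theta 0 i) ->
  (forall k, (exists2 i, i \in community Theta k & theta 0 i = 1) /\
             (forall i, i \in community Theta k -> theta 0 i <= 1)) ->
  (* eigenvalue decomposition P = U Sigma U^T *)
  U^T *m U = 1%:M -> is_diag_mx Sigma -> Pmat Theta theta B = U *m Sigma *m U^T ->
  (* eigenvalue decomposition Bbar = H D H^T *)
  H^T *m H = 1%:M -> is_diag_mx D -> Bbar Theta theta B = H *m D *m H^T ->
  0 < eta -> 0 < iota_lo -> 0 < iota_hi -> 0 < beta ->
  (forall k l : 'I_K, (k < l)%N ->
     Bbar Theta theta B k k * Bbar Theta theta B l l - (Bbar Theta theta B k l) ^+ 2 >= eta) ->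
  (forall i, iota_lo < Sigma i i < iota_hi) ->
  (forall k, 0 < Bbar Theta theta B k k /\ Bbar Theta theta B k k <= beta) ->
  forall k l : 'I_K, k != l ->
    cosv (row k H) (row l H) <= Num.sqrt (1 - eta / (iota_hi * beta ^+ 2 / iota_lo)).
Proof.
move=> memb comm_ne _ _ rkB _ theta_gt0 _ oU Sdiag PU oH Ddiag BH eta_gt0 lo_gt0 hi_gt0 _
  eta_le Sb Bbb k l kl.
have om_neq0 k0 : norm2 (phi Theta theta k0) != 0.
  by rewrite lt0r_neq0 // norm2_phi_gt0.
pose Z := normalized_cols (phi Theta theta).
have oZH : (Z *m H)^T *m (Z *m H) = 1%:M.
  by rewrite trmx_mul mulmxA -(mulmxA H^T) normalized_cols_orthonormal ?mulmx1 //;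
    exact: dotv_phi_neq.
have ZHDU : Z *m H *m D *m (Z *m H)^T = U *m Sigma *m U^T.
  by rewrite -PU Pmat_normalized // BH trmx_mul !mulmxA.
have uD : D \in unitmx by apply: (Bbar_eigen_unit om_neq0 rkB BH).
have Sb_le i : iota_lo <= Sigma i i <= iota_hi.
  by case/andP: (Sb i) => lo_S S_hi; rewrite !ltW.
have Db := spectral_form_bounds oZH oU uD ZHDU Sdiag Sb_le.
have sD : D^T = D by case/diag_mxP: Ddiag => d ->; rewrite tr_diag_mx.
have Bbar_form k0 l0 : Bbar Theta theta B k0 l0 = bform D (row k0 H) (row l0 H).
  by rewrite bform_row BH.
apply: (cosv_le_of_form_bounds D) => //; rewrite -!Bbar_form.
- by case: (Bbb k) => -> ->.
- by case: (Bbb l) => -> ->.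
have [kl_lt|lk_lt|k_eq_l] := ltngtP k l; first exact: eta_le.
  by rewrite mulrC !Bbar_form (bform_sym _ _ _ sD) -!Bbar_form; exact: eta_le.
by move: kl; rewrite (val_inj k_eq_l) eqxx.
Qed.
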